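(* Let $P$ be a finite poset and $X:P\to\mathcal{P}_{<\infty}$ a diagram of finite posets. If $p\in P$ is an up beat point of $P$, then $\operatorname{\underline{hocolim}} X$ collapses to $\operatorname{\underline{hocolim}} X|_{P\smallsetminus\{p\}}$. In particular, they are weak equivalent.
   Context: $P$ is viewed as a category with a unique arrow $p\to q$ iff $p\le q$; $\mathcal{P}_{<\infty}$ is the category of finite posets and order-preserving maps. Write $X_p=X(p)$, $f_{pq}=X(p\to q)$. $\operatorname{\underline{hocolim}} X$ is the poset on $\coprod_{p}X_p$ keeping the order within each $X_p$ and, for $x\in X_p$, $y\in X_q$, $p\le q$, setting $x\le y$ iff $f_{pq}(x)\le y$ in $X_q$. For a subposet $Q'\subseteq P$, $X|_{Q'}$ is the restricted diagram, and $\operatorname{\underline{hocolim}} X|_{Q'}$ is a subposet of $\operatorname{\underline{hocolim}} X$. For $x$ in a finite poset $Y$: $U_x=\{y\le x\}$, $\hat U_x=U_x\smallsetminus\{x\}$, $F_x=\{y\ge x\}$, $\hat F_x=F_x\smallsetminus\{x\}$. $x$ is an up beat point if $\hat F_x$ has a minimum, a down beat point if $\hat U_x$ has a maximum. A finite poset is contractible (dismantlable) if it can be reduced to a single point by removing beat points one at a time. $x$ is a down (resp. up) weak point if $\hat U_x$ (resp. $\hat F_x$) is contractible; removing a weak point is an elementary collapse, and $Y$ collapses to $Z$ if $Z$ is obtained from $Y$ by a sequence of elementary collapses. Two finite posets are weak equivalent if their order complexes (simplicial complexes of nonempty chains) are homotopy equivalent. *)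

From mathcomp Require Import all_boot.
Set Implicit Arguments. Unset Strict Implicit. Unset Printing Implicit Defensive.

(* A finite poset is a finType with a (boolean) partial order.  Subposets of a
   fixed finite poset (T, le) are represented by subsets S : {set T} with the
   induced order. *)
Definition is_poset (T : finType) (le : rel T) : Prop :=
  [/\ reflexive le, antisymmetric le & transitive le].

Section SubPosets.
Variables (T : finType) (le : rel T).

Definition Uset (S : {set T}) (x : T) : {set T} := [set y in S | le y x].
Definition hUset (S : {set T}) (x : T) : {set T} := Uset S x :\ x.
Definition Fset (S : {set T}) (x : T) : {set T} := [set y in S | le x y].
Definition hFset (S : {set T}) (x : T) : {set T} := Fset S x :\ x.

Definition has_min (A : {set T}) : Prop :=
  exists2 m, m \in A & forall y, y \in A -> le m y.
Definition has_max (A : {set T}) : Prop :=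
  exists2 m, m \in A & forall y, y \in A -> le y m.

Definition up_beat_point (S : {set T}) (x : T) : Prop :=
  x \in S /\ has_min (hFset S x).
Definition down_beat_point (S : {set T}) (x : T) : Prop :=
  x \in S /\ has_max (hUset S x).
Definition beat_point (S : {set T}) (x : T) : Prop :=
  up_beat_point S x \/ down_beat_point S x.

Inductive contractible : {set T} -> Prop :=
  | contr_point x : contractible [set x]
  | contr_step S x : beat_point S x -> contractible (S :\ x) -> contractible S.

Definition down_weak_point (S : {set T}) (x : T) : Prop :=
  x \in S /\ contractible (hUset S x).
Definition up_weak_point (S : {set T}) (x : T) : Prop :=
  x \in S /\ contractible (hFset S x).
Definition weak_point (S : {set T}) (x : T) : Prop :=
  down_weak_point S x \/ up_weak_point S x.

Inductive collapses : {set T} -> {set T} -> Prop :=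
  | collapses_refl S : collapses S S
  | collapses_step S x Z : weak_point S x -> collapses (S :\ x) Z -> collapses S Z.

End SubPosets.

Unset Implicit Arguments.

(* The poset hocolim X of a diagram X : P -> finite posets, with
   f p q h : X p -> X q the map X(p -> q), defined for h : p <= q.
   The underlying set is the disjoint union {p : P & X p}. *)
Section Hocolim.
Variables (P : finType) (leP : rel P) (X : P -> finType)
  (lex : forall p, rel (X p)) (f : forall p q, leP p q -> X p -> X q).

Definition hle (u v : {p : P & X p}) : bool :=
  let: existT p x := u in
  let: existT q y := v in
  (if leP p q as b return leP p q = b -> bool
   then fun h => lex q (f p q h x) y else fun _ => false) (erefl (leP p q)).

(* hocolim X|_{Q'} as a subposet of hocolim X *)
Definition hocolim_restr (Q : {set P}) : {set {p : P & X p}} :=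
  [set u | tag u \in Q].

End Hocolim.
Arguments hle {P leP X} lex f u v.
Arguments hocolim_restr {P} X Q.

From Pilot Require Import Defs.
From mathcomp Require Import all_boot.

(* Let q be the minimum of \hat F_p in P.  Remove the points over p one at a
   time, each time a maximal one (p, x) among those left.  It is an up weak
   point: \hat F_(p,x) in what remains has the minimum (q, f_pq x), hence is
   contractible.  Indeed a point (r, z) above (p, x) with r <> p satisfies
   q <= r and f_pr x = f_qr (f_pq x), while a point above it in the fibre over
   p would contradict maximality. *)

Set Implicit Arguments.
Unset Strict Implicit.
Unset Printing Implicit Defensive.

Lemma is_poset_dual (T : finType) (le : rel T) :
  is_poset le -> is_poset (fun x y => le y x).
Proof.
case=> le_refl le_anti le_trans; split=> // [x y /andP[yx xy]|x y z yx zy].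
  by apply: le_anti; rewrite xy yx.
exact: le_trans zy yx.
Qed.

Lemma exists_maximal (T : finType) (le : rel T) (A : {set T}) (x0 : T) :
  is_poset le -> x0 \in A ->
  exists2 x, x \in A & forall y, y \in A -> le x y -> y = x.
Proof.
case=> le_refl le_anti le_trans x0A.
have [x xA x_min] := arg_minnP (fun x => #|Fset le A x|) x0A.
exists x => // y yA le_xy; apply/eqP/negPn/negP => neq_yx.
have: Fset le A y \proper Fset le A x.
  rewrite properE; apply/andP; split.
    by apply/subsetP=> z; rewrite !inE => /andP[-> /(le_trans _ _ _ le_xy)].
  apply/negP => /subsetP /(_ x); rewrite !inE (xA : x \in A) le_refl => /(_ isT) le_yx.
  by move: neq_yx; rewrite (le_anti x y) ?eqxx // le_xy le_yx.
by move/proper_card; rewrite ltnNge x_min.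
Qed.

Section Dismantling.
Variables (T : finType) (le : rel T).
Hypothesis le_poset : is_poset le.

(* A minimal point x of S :\ m is a down beat point of S, since \hat U_x = {m}. *)
Lemma contractible_of_min (S : {set T}) (m : T) :
  m \in S -> (forall y, y \in S -> le m y) -> contractible le S.
Proof.
have [le_refl le_anti _] := le_poset.
elim: {S}_.+1 {-2}S (ltnSn #|S|) => // n IH S leSn mS m_min.
have [Sm0 | [x0 x0S]] := set_0Vmem (S :\ m).
  suff -> : S = [set m] by apply: contr_point.
  apply/setP=> z; rewrite inE; apply/idP/eqP=> [zS | -> //].
  apply/eqP/negPn/negP=> zm.
  by have := in_set0 z; rewrite -Sm0 !inE zm zS.
have [x xS x_min] := exists_maximal (is_poset_dual le_poset) x0S.
move: (xS); rewrite !inE => /andP[xm xS'].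
apply: (@contr_step _ _ _ x); last apply: IH.
- right; split=> //; exists m; first by rewrite !inE eq_sym xm mS m_min.
  move=> y; rewrite !inE => /andP[yx /andP[yS le_yx]].
  have [-> // | ym] := eqVneq y m.
  by rewrite (x_min y) ?eqxx ?inE ?ym in yx.
- by rewrite (cardsD1 x) xS' in leSn.
- by rewrite !inE eq_sym xm.
- by move=> y; rewrite !inE => /andP[_ /m_min].
Qed.

Lemma collapses_setU (Z B : {set T}) :
  [disjoint Z & B] ->
  (forall A : {set T}, A \subset B -> A != set0 ->
     exists2 x, x \in A & weak_point le (Z :|: A) x) ->
  collapses le (Z :|: B) Z.
Proof.
move=> dZB removable.
suff: forall A : {set T}, A \subset B -> collapses le (Z :|: A) Z by apply.
move=> A; elim: {A}_.+1 {-2}A (ltnSn #|A|) => // n IH A leAn sAB.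
have [-> | nA] := eqVneq A set0; first by rewrite setU0; apply: collapses_refl.
have [x xA x_weak] := removable A sAB nA.
have xZ : x \notin Z by rewrite (disjointFl dZB) // (subsetP sAB).
apply: (collapses_step x_weak).
have -> : (Z :|: A) :\ x = Z :|: (A :\ x).
  by rewrite setDUl (setDidPl _) // disjoint_sym disjoints1.
apply: IH; first by rewrite (cardsD1 x) xA in leAn.
by apply: subset_trans sAB; apply: subsetDl.
Qed.

End Dismantling.

Section Hocolim.
Variables (P : finType) (leP : rel P) (X : P -> finType).
Variables (lex : forall p, rel (X p)) (f : forall p q, leP p q -> X p -> X q).
Local Notation hle := (hle lex f).

Lemma hleP p q (x : X p) (y : X q) :
  reflect (exists h : leP p q, lex (f h x) y) (hle (existT _ p x) (existT _ q y)).
Proof.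
rewrite /Defs.hle.
have hle_case b (e : leP p q = b) :
    reflect (exists h : leP p q, lex (f h x) y)
      ((if b as b' return leP p q = b' -> bool
        then fun h => lex (f h x) y else fun _ => false) e).
  case: b e => e.
    by apply: (iffP idP) => [|[h]]; [exists e | rewrite (bool_irrelevance e h)].
  by constructor=> -[h _]; rewrite e in h.
exact: hle_case.
Qed.

Hypothesis leP_poset : is_poset leP.
Hypothesis lex_poset : forall p, is_poset (@lex p).
Hypothesis f_mono : forall p q (h : leP p q) (x y : X p),
  lex x y -> lex (f h x) (f h y).
Hypothesis f_id : forall p (h : leP p p) (x : X p), f h x = x.
Hypothesis f_comp : forall p q r (h1 : leP p q) (h2 : leP q r) (h3 : leP p r)
  (x : X p), f h3 x = f h2 (f h1 x).

Lemma hle_poset : is_poset hle.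
Proof.
have [leP_refl leP_anti leP_trans] := leP_poset.
split.
- case=> r x; apply/hleP; exists (leP_refl r); rewrite f_id.
  by case: (lex_poset r).
- case=> r x [s y] /andP[/hleP[h1 le_xy] /hleP[h2 le_yx]].
  have E : r = s by apply: leP_anti; rewrite h1 h2.
  subst s; rewrite f_id in le_xy; rewrite f_id in le_yx.
  by case: (lex_poset r) => _ lex_anti _; rewrite (lex_anti x y) ?le_xy.
- case=> s y [r x] [t z] /hleP[h1 le_yx] /hleP[h2 le_xz].
  apply/hleP; exists (leP_trans _ _ _ h1 h2); rewrite (f_comp h1 h2).
  by case: (lex_poset t) => _ _ lex_trans; apply: lex_trans le_xz; apply: f_mono.
Qed.

Lemma up_weak_point_fibre_max (S : {set {r : P & X r}}) p q (hpq : leP p q)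
    (x : X p) :
  q != p -> (forall r, r != p -> leP p r -> leP q r) ->
  existT _ q (f hpq x) \in S -> existT _ p x \in S ->
  (forall v, v \in S -> tag v = p -> hle (existT _ p x) v -> v = existT _ p x) ->
  up_weak_point hle S (existT _ p x).
Proof.
move=> qp q_min fxS xS x_max; split=> //.
apply: (contractible_of_min hle_poset (m := existT _ q (f hpq x))).
  rewrite !inE fxS /=; apply/andP; split.
    by apply: contra qp => /eqP/(f_equal tag) /= ->.
  by apply/hleP; exists hpq; case: (lex_poset q).
case=> r z; rewrite !inE => /andP[zx /andP[zS /hleP[h le_xz]]].
have [E | rp] := eqVneq r p.
  subst r; have E := x_max _ zS erefl (introT (hleP _ _) (ex_intro _ h le_xz)).
  by rewrite E eqxx in zx.
have hqr := q_min r rp h.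
by apply/hleP; exists hqr; rewrite -(f_comp hpq hqr h).
Qed.

End Hocolim.

Theorem proposition2p4
  (P : finType) (leP : rel P) (HP : is_poset leP)
  (X : P -> finType) (lex : forall p, rel (X p))
  (HX : forall p, is_poset (@lex p))
  (f : forall p q, leP p q -> X p -> X q)
  (f_mono : forall p q (h : leP p q) (x y : X p),
     lex p x y -> lex q (f p q h x) (f p q h y))
  (f_id : forall p (h : leP p p) (x : X p), f p p h x = x)
  (f_comp : forall p q r (h1 : leP p q) (h2 : leP q r) (h3 : leP p r) (x : X p),
     f p r h3 x = f q r h2 (f p q h1 x))
  (p : P) (Hp : up_beat_point leP [set: P] p) :
  collapses (hle lex f) [set: {q : P & X q}] (hocolim_restr X [set~ p]).
Proof.
have hle_po := hle_poset HP HX f_mono f_id f_comp.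
case: Hp => _ [q]; rewrite !inE => /andP[qp /andP[_ hpq]] q_min.
have -> : [set: {r : P & X r}] =
          hocolim_restr X [set~ p] :|: [set u | tag u == p].
  by apply/setP=> u; rewrite !inE; case: (tag u == p).
apply: collapses_setU => [|A sAB /set0Pn[u0 u0A]].
  by rewrite -setI_eq0; apply/eqP/setP=> u; rewrite !inE andNb.
have [[r x] xA x_max] := exists_maximal hle_po u0A.
have := subsetP sAB _ xA; rewrite inE /= => /eqP E; subst r.
exists (existT _ p x) => //; right.
apply: (up_weak_point_fibre_max HP HX f_mono f_id f_comp (hpq := hpq)) => //.
- by move=> r rp hpr; apply: q_min; rewrite !inE rp hpr.
- by rewrite !inE /= qp.
- by rewrite inE xA orbT.
- move=> v; rewrite inE => /orP[|vA _]; last exact: x_max.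
  by rewrite !inE => /negP + E; rewrite E eqxx.
Qed.
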